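(* (a) Let $p=\prod_{i\in I}\Phi_{m_i}$ be a product of cyclotomic polynomials. Then $p(1)\equiv1\pmod2$ if and only if all $m_i\in\mathbb Z_{\ge1}-\{2^k\mid k\in\mathbb Z_{\ge0}\}$. (b) Let $\Lambda$ be a $\mathbb Z$-lattice with an automorphism $M_h$ of finite order, and let $\Lambda^{(1)}\subset\Lambda$ be an $M_h$-invariant sublattice with $[\Lambda:\Lambda^{(1)}]=2$. Write the characteristic polynomial $p_\Lambda=p_1p_2$ with $p_j=\prod_{m\in J_j}\Phi_m$, where $J_1\subset\mathbb Z_{\ge1}-\{2^k\mid k\in\mathbb Z_{\ge0}\}$ and $J_2\subset\{2^k\mid k\in\mathbb Z_{\ge0}\}$. Then $J_2\ne\emptyset$, $p_2\ne1$, $\Lambda_p=\Lambda^{(1)}_p$ for every $p$ with $p\mid p_1$, and $[\Lambda_p:\Lambda^{(1)}_p]=2$ for every $p$ with $p_2\mid p$ (here $p$ ranges over products of cyclotomic polynomials dividing $p_\Lambda$).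
   Context: $\Phi_n$ is the $n$-th cyclotomic polynomial. For an $M_h$-invariant sublattice $B$ and a product $p$ of cyclotomic polynomials dividing the characteristic polynomial of $M_h$ on $B$, $B_p:=(\bigoplus_{\lambda:p(\lambda)=0}B_\lambda)\cap B$, with $B_\lambda=\ker(M_h-\lambda)\subset B\otimes\mathbb C$. *)

From mathcomp Require Import all_boot all_order all_algebra all_field.
Set Implicit Arguments. Unset Strict Implicit. Unset Printing Implicit Defensive.
Import Order.TTheory GRing.Theory Num.Theory.
Local Open Scope ring_scope.

Definition is_pow2 (m : nat) : Prop := exists k : nat, m = (2 ^ k)%N.

Definition cycl_prod (s : seq nat) : {poly int} := \prod_(m <- s) 'Phi_m.

(* Lattice Lambda = Z^n (row vectors), M_h acting by v |-> v *m M. *)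
Definition in_eigsum n (M : 'M[algC]_n) (p : {poly algC}) (x : 'rV[algC]_n) : Prop :=
  exists s : seq (algC * 'rV[algC]_n),
    (forall lv, lv \in s -> root p lv.1 /\ lv.2 *m M = lv.1 *: lv.2) /\
    x = \sum_(lv <- s) lv.2.

(* B_p := (direct sum of the B_lambda, p(lambda)=0) intersected with B *)
Definition Bpart n (M : 'M[int]_n) (B : 'rV[int]_n -> Prop) (p : {poly int})
  : 'rV[int]_n -> Prop :=
  fun x => B x /\ in_eigsum (map_mx intr M) (map_poly intr p) (map_mx intr x).

Definition inv_sublattice n (M : 'M[int]_n) (B : 'rV[int]_n -> Prop) : Prop :=
  [/\ B 0, (forall x y, B x -> B y -> B (x + y)), (forall x, B x -> B (- x))
    & (forall x, B x -> B (x *m M))].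

Definition index2 n (A B : 'rV[int]_n -> Prop) : Prop :=
  (forall x, B x -> A x) /\
  exists v, [/\ A v, ~ B v & forall x, A x -> B x \/ B (x - v)].

From mathcomp Require Import all_boot all_order all_algebra all_field.
Import Order.TTheory GRing.Theory Num.Theory.
Local Open Scope ring_scope.
Set Implicit Arguments. Unset Strict Implicit. Unset Printing Implicit Defensive.

(* (a) For a | n, the product of the Phi_d with d | n and d not dividing a is
   (X^n - 1) / (X^a - 1), whose value at 1 is n / a.  Taking n = 2^(k+1) and
   a = 2^k gives Phi_(2^(k+1))(1) = 2, and taking a the 2-part of an m which is
   not a power of 2 shows that Phi_m(1) divides the odd part of m; finally
   Phi_1(1) = 0.
   (b) Lambda / Lambda1 is Z/2, which has no nontrivial automorphism, so M_h acts
   trivially on it and p(M_h) acts as multiplication by p(1).  Hence, when p(1)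
   is odd, x p(M_h) in Lambda1 forces x in Lambda1.  Since M_h has finite order
   it is diagonalisable over C, so Lambda_p is the kernel of p(M_h).  If p | p_1
   then p(1) is odd and Lambda_p = Lambda1_p.  If p_2 | p, write p_Lambda = q p;
   then q | p_1, and v = v0 q(M_h), for any v0 outside Lambda1, lies in Lambda_p
   but not in Lambda1, which gives the index 2.  Last, p_Lambda(1) is even, as
   otherwise v0 p_Lambda(M_h) = 0 would put v0 in Lambda1; thus p_2 <> 1. *)

Lemma divisors_filter_dvdn n a : (0 < n)%N -> (0 < a)%N -> (a %| n)%N ->
  perm_eq [seq d <- divisors n | (d %| a)%N] (divisors a).
Proof.
move=> n_gt0 a_gt0 a_n; apply: uniq_perm; rewrite ?filter_uniq ?divisors_uniq //.
move=> d; rewrite mem_filter -!dvdn_divisors //.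
by apply/andP/idP => [[] // | d_a]; split; last exact: dvdn_trans a_n.
Qed.

Lemma prod_Cyclotomic_ndvd n a : (0 < n)%N -> (0 < a)%N -> (a %| n)%N ->
  \prod_(d <- divisors n | ~~ (d %| a)%N) 'Phi_d = \sum_(i < n %/ a) 'X^a ^+ i.
Proof.
move=> n_gt0 a_gt0 a_n; apply: (@mulfI _ ('X^a - 1)).
  by rewrite -[1]polyC1 monic_neq0 ?monicXnsubC.
rewrite -subrX1 -exprM mulnC divnK // -(prod_Cyclotomic n_gt0) -(prod_Cyclotomic a_gt0).
rewrite [RHS](bigID (dvdn^~ a)) /= -[in RHS]big_filter.
by rewrite (perm_big _ (divisors_filter_dvdn n_gt0 a_gt0 a_n)).
Qed.

Lemma prod_Cyclotomic_ndvd_at1 n a : (0 < n)%N -> (0 < a)%N -> (a %| n)%N ->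
  \prod_(d <- divisors n | ~~ (d %| a)%N) ('Phi_d).[1] = (n %/ a)%:Z.
Proof.
move=> n_gt0 a_gt0 a_n; rewrite -horner_prod prod_Cyclotomic_ndvd // horner_sum.
under eq_bigr do rewrite -exprM hornerXn expr1n.
by rewrite sumr_const card_ord natz.
Qed.

Lemma Cyclotomic_at1_pow2 k : ('Phi_(2 ^ k.+1)).[1] = 2.
Proof.
have pow2_gt0 j : (0 < 2 ^ j)%N by rewrite expn_gt0.
have := prod_Cyclotomic_ndvd_at1 (pow2_gt0 k.+1) (pow2_gt0 k) (dvdn_exp2l 2 (leqnSn k)).
rewrite expnS mulnK // -expnS big_seq_cond (eq_bigl (pred1 (2 ^ k.+1)%N)) => [|d].
  by rewrite -big_filter filter_pred1_uniq ?divisors_uniq ?divisors_id // big_seq1.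
rewrite /= -dvdn_divisors //; apply/andP/eqP => [[/dvdn_pfactor[//|j j_le ->]] | ->].
  by rewrite dvdn_Pexp2l // -ltnNge => j_gt; congr (_ ^ _)%N; apply/eqP; rewrite eqn_leq j_le.
by rewrite dvdnn dvdn_Pexp2l // ltnn.
Qed.

Lemma Cyclotomic_at1_dvd_odd_part m : (0 < m)%N -> ~ is_pow2 m ->
  (('Phi_m).[1] %| (m`_2^')%N%:Z)%Z.
Proof.
move=> m_gt0 not_pow2; have a_gt0 := part_gt0 2%N m; have a_m := dvdn_part 2%N m.
have m_ndvd_a : ~~ (m %| m`_2%N)%N.
  apply: contra_notN not_pow2 => m_a; exists (logn 2 m).
  by rewrite -(p_part 2%N); apply/eqP; rewrite eqn_dvd m_a a_m.
have := prod_Cyclotomic_ndvd_at1 m_gt0 a_gt0 a_m.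
rewrite -[X in (X %/ _)%N](partnC 2%N m_gt0) mulKn // (big_rem m) -?dvdn_divisors //.
rewrite m_ndvd_a => <-.
exact/dvdz_mulr/dvdzz.
Qed.

Lemma Cyclotomic1 : 'Phi_1 = 'X - 1.
Proof. by have := prod_Cyclotomic (ltn0Sn 0); rewrite big_seq1. Qed.

Lemma Cyclotomic_at1_odd m : (0 < m)%N -> ~~ (2 %| ('Phi_m).[1])%Z <-> ~ is_pow2 m.
Proof.
move=> m_gt0; split=> [odd_Phi [[|k] m_pow2] | not_pow2].
- by move: odd_Phi; rewrite m_pow2 Cyclotomic1 !hornerE subrr dvdz0.
- by move: odd_Phi; rewrite m_pow2 Cyclotomic_at1_pow2 dvdzz.
apply/negP => /dvdz_trans/(_ (Cyclotomic_at1_dvd_odd_part m_gt0 not_pow2)).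
by rewrite dvdzE dvdn2 odd_2'nat part_pnat.
Qed.

Lemma Euclid_dvdzM p (x y : int) : prime p ->
  (p %| x * y)%Z = (p %| x)%Z || (p %| y)%Z.
Proof. by move=> p_pr; rewrite !dvdzE abszM Euclid_dvdM. Qed.

Lemma modz2_eq1 (x : int) : (x %% 2)%Z = 1 <-> ~~ (2 %| x)%Z.
Proof.
split=> [x_mod | /dvdz_mod0P x_mod]; first by apply/dvdz_mod0P; rewrite x_mod.
have x_mod_ge0 : (0 <= x %% 2)%Z by apply: modz_ge0.
have x_mod_lt2 : (x %% 2 < 2)%Z by apply: ltz_pmod.
by move: x_mod x_mod_ge0 x_mod_lt2; case: (x %% 2)%Z => [[|[|]]|].
Qed.

Lemma cycl_prod_at1_odd s : (forall m, m \in s -> (0 < m)%N) ->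
  ~~ (2 %| (cycl_prod s).[1])%Z <-> (forall m, m \in s -> ~ is_pow2 m).
Proof.
rewrite /cycl_prod; elim: s => [|m s IHs] s_gt0; first by rewrite big_nil hornerC.
have m_gt0 := s_gt0 m (mem_head m s).
have {}IHs := IHs (fun m' m's => s_gt0 m' (mem_behead (s := m :: s) m's)).
rewrite big_cons hornerM Euclid_dvdzM // negb_or.
split=> [/andP[/(Cyclotomic_at1_odd m_gt0) m_npow2 /IHs s_npow2] m' | npow2].
  by rewrite inE => /predU1P[-> | /s_npow2].
apply/andP; split; first exact/(Cyclotomic_at1_odd m_gt0)/npow2/mem_head.
by apply/IHs => m' m's; apply: npow2; rewrite inE m's orbT.
Qed.

Lemma cycl_prod_at1_mod2 s : (forall m, m \in s -> (0 < m)%N) ->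
  ((cycl_prod s).[1] %% 2)%Z = 1 <-> (forall m, m \in s -> ~ is_pow2 m).
Proof. by move=> s_gt0; apply: iff_trans (modz2_eq1 _) (cycl_prod_at1_odd s_gt0). Qed.

Lemma cycl_prod_monic s : cycl_prod s \is monic.
Proof. by apply: monic_prod => m _; apply: Cyclotomic_monic. Qed.

Lemma dvdp_monic_at1_odd (d p : {poly int}) :
  d \is monic -> d %| p -> ~~ (2 %| p.[1])%Z -> ~~ (2 %| d.[1])%Z.
Proof.
move=> d_monic /(Pdiv.IdomainMonic.dvdpP d_monic)[q ->].
by rewrite hornerM Euclid_dvdzM // negb_or => /andP[].
Qed.

Lemma sum_expr_unity_root_eq0 (R : idomainType) k (g : R) :
  g ^+ k = 1 -> g != 1 -> \sum_(i < k) g ^+ i = 0.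
Proof.
move=> g_k g_neq1; apply/eqP; have := subrX1 g k.
by rewrite g_k subrr => /esym/eqP; rewrite mulf_eq0 subr_eq0 (negbTE g_neq1).
Qed.

Lemma sum_nat_shift_periodic (V : zmodType) k (f : nat -> V) : f k = f 0%N ->
  \sum_(0 <= j < k) f j.+1 = \sum_(0 <= j < k) f j.
Proof.
move=> f_k; apply: (@addIr _ (f 0%N)).
by rewrite -[in RHS]f_k -big_nat_recr // big_nat_recl // addrC.
Qed.

Lemma eigen_horner_mx (R : comNzRingType) n' (A : 'M[R]_n'.+1) (w : 'rV_n'.+1) a p :
  w *m A = a *: w -> w *m horner_mx A p = p.[a] *: w.
Proof.
move=> wA; elim/poly_ind: p => [|p c IHp]; first by rewrite rmorph0 mulmx0 horner0 scale0r.
rewrite rmorphD rmorphM /= horner_mx_X horner_mx_C mulmxDr -mulmxE mulmxA IHp.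
by rewrite mul_mx_scalar -scalemxAl wA scalerA !hornerE scalerDl.
Qed.

Lemma in_eigsum_horner_eq0 n' (A : 'M[algC]_n'.+1) p w :
  in_eigsum A p w -> w *m horner_mx A p = 0.
Proof.
case=> s [s_eigen ->]; rewrite mulmx_suml big1_seq // => lv /andP[_ /s_eigen[p_a lvA]].
by rewrite (eigen_horner_mx p lvA) (eqP p_a) scale0r.
Qed.

Section FiniteOrderEigen.

Variables (F : fieldType) (n' k : nat) (z : F) (A : 'M[F]_n'.+1).
Hypotheses (z_prim : k.-primitive_root z) (A_k : A ^+ k = 1).

(* Averaging w A^j against the character j |-> z^(-ij) projects onto the
   z^i-eigenspace of A. *)
Definition eigen_proj (w : 'rV[F]_n'.+1) (i : nat) : 'rV_n'.+1 :=
  k%:R^-1 *: \sum_(0 <= j < k) (z ^- i) ^+ j *: (w *m A ^+ j).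

Lemma eigen_projP w i : eigen_proj w i *m A = z ^+ i *: eigen_proj w i.
Proof.
have zi_neq0 : z ^+ i != 0.
  by rewrite expf_neq0 // (prim_root_eq0 z_prim) -lt0n (prim_order_gt0 z_prim).
pose f j := (z ^- i) ^+ j *: (w *m A ^+ j).
have f_k : f k = f 0%N.
  by rewrite /f A_k exprVn -exprM mulnC exprM (prim_expr_order z_prim) expr1n invr1 !expr0.
rewrite /eigen_proj -scalemxAl mulmx_suml scalerA mulrC -scalerA; congr (_ *: _).
rewrite -(sum_nat_shift_periodic f_k) scaler_sumr; apply: eq_bigr => j _.
rewrite /f -scalemxAl -mulmxA mulmxE -exprSr scalerA [in z ^+ i * _]exprSr.
by rewrite mulrCA mulfV // mulr1.
Qed.

Lemma sum_eigen_proj w : \sum_(0 <= i < k) eigen_proj w i = w.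
Proof.
have k_gt0 := prim_order_gt0 z_prim.
rewrite -scaler_sumr exchange_big /=; under eq_bigr do rewrite -scaler_suml.
rewrite big_ltn // [X in _ + X]big_nat_cond [X in _ + X]big1.
  rewrite sumr_const_nat subn0 expr0 mulmx1 addr0 scalerA mulVf ?scale1r //.
  exact: prim_root_natf_neq0 z_prim.
move=> j /andP[/andP[j_gt0 j_lt_k] _].
under eq_bigr do rewrite exprVn -exprM mulnC exprM -exprVn.
rewrite big_mkord sum_expr_unity_root_eq0 ?scale0r //.
  by rewrite exprVn -exprM mulnC exprM (prim_expr_order z_prim) expr1n invr1.
by rewrite invr_eq1 -(prim_order_dvd z_prim) gtnNdvd.
Qed.

Lemma eigen_proj_eq0 w p i :
  w *m horner_mx A p = 0 -> ~~ root p (z ^+ i) -> eigen_proj w i = 0.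
Proof.
move=> wp_eq0 p_zi; have := eigen_horner_mx p (eigen_projP w i).
rewrite {1}/eigen_proj -scalemxAl mulmx_suml big1 ?scaler0 => [/esym/eqP | j _].
  by rewrite scaler_eq0 -rootE (negbTE p_zi) => /eqP.
have -> : A ^+ j = horner_mx A ('X ^+ j) by rewrite rmorphXn /= horner_mx_X.
by rewrite -scalemxAl -mulmxA mulmxE comm_horner_mx2 -mulmxE mulmxA wp_eq0 mul0mx scaler0.
Qed.

End FiniteOrderEigen.

Lemma horner_eq0_in_eigsum n' (A : 'M[algC]_n'.+1) k p w : (0 < k)%N -> A ^+ k = 1 ->
  w *m horner_mx A p = 0 -> in_eigsum A p w.
Proof.
move=> k_gt0 A_k wp_eq0; have [z z_prim] := C_prim_root_exists k_gt0.
exists [seq (z ^+ i, eigen_proj k z A w i) | i <- iota 0 k & root p (z ^+ i)]; split.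
  move=> lv /mapP[i]; rewrite mem_filter => /andP[p_zi _] -> /=.
  by split; last exact: (eigen_projP (F := algC) z_prim A_k).
rewrite big_map big_filter big_mkcond -[LHS](sum_eigen_proj A z_prim) /index_iota subn0.
apply: eq_bigr => i _; case: ifP => // /negbT.
exact: (eigen_proj_eq0 (F := algC) z_prim A_k wp_eq0).
Qed.

Lemma map_mx_intr_eq0 (R : numDomainType) m n (A : 'M[int]_(m, n)) :
  (map_mx (intr : int -> R) A == 0) = (A == 0).
Proof.
apply/eqP/eqP => [/matrixP A0 | ->]; last by apply/matrixP => i j; rewrite !mxE mulr0z.
by apply/matrixP => i j; have := A0 i j; rewrite !mxE => /eqP; rewrite intr_eq0 => /eqP.
Qed.

Lemma Bpart_horner n' (M : 'M[int]_n'.+1) k : (0 < k)%N -> M ^+ k = 1 ->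
  forall B p x, Bpart M B p x <-> B x /\ x *m horner_mx M p = 0.
Proof.
move=> k_gt0 M_k B p x; have MC_k : map_mx (intr : int -> algC) M ^+ k = 1.
  by rewrite -rmorphXn /= M_k rmorph1.
have horner_map : map_mx intr (x *m horner_mx M p) =
    map_mx intr x *m horner_mx (map_mx intr M) (map_poly (intr : int -> algC) p).
  by rewrite map_mxM map_horner_mx.
rewrite /Bpart; split=> -[Bx xp_eq0]; split => //.
  by apply/eqP; rewrite -(map_mx_intr_eq0 algC) horner_map in_eigsum_horner_eq0.
by apply: horner_eq0_in_eigsum k_gt0 MC_k _; rewrite -horner_map xp_eq0 map_mx0.
Qed.

Section IndexTwoSublattice.

Variables (n' k : nat) (M : 'M[int]_n'.+1) (L : 'rV[int]_n'.+1 -> Prop) (v0 : 'rV[int]_n'.+1).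
Hypotheses (L_inv : inv_sublattice M L) (k_gt0 : (0 < k)%N) (M_k : M ^+ k = 1).
Hypotheses (v0_notin_L : ~ L v0) (L_cosets : forall x, L x \/ L (x - v0)).

Lemma sublattice_sub x y : L x -> L y -> L (x - y).
Proof. by case: L_inv => _ L_add L_opp _ Lx Ly; apply/L_add/L_opp. Qed.

Lemma sublattice_scale c x : L x -> L (c *: x).
Proof.
case: L_inv => L0 L_add L_opp _ Lx.
have L_nat m : L (m%:Z *: x).
  by rewrite -natz scaler_nat; elim: m => [|m IHm]; rewrite ?mulrS; auto.
by case: c => m; rewrite ?NegzE ?scaleNr; auto.
Qed.

Lemma sublattice_mulmx_pow j x : L x -> L (x *m M ^+ j).
Proof.
case: L_inv => _ _ _ L_mul; elim: j x => [|j IHj] x Lx; first by rewrite expr0 mulmx1.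
by rewrite exprS -mulmxE mulmxA; apply/IHj/L_mul.
Qed.

Lemma sublattice_double x : L (x *+ 2).
Proof.
case: L_inv => _ L_add _ _.
have L_v0 : L (v0 *+ 2) by case: (L_cosets (v0 *+ 2)) => //; rewrite mulr2n addrK.
case: (L_cosets x) => [Lx | Lxv]; first by rewrite mulr2n; apply: L_add.
by have := L_add _ _ (L_add _ _ Lxv Lxv) L_v0; rewrite -mulr2n -mulrnDl subrK.
Qed.

Lemma sublattice_mulmx_sub x : L (x *m M - x).
Proof.
case: L_inv => _ _ _ L_mul.
have L_mulK y : L (y *m M) -> L y.
  by move/(sublattice_mulmx_pow k.-1); rewrite -mulmxA mulmxE -exprS prednK // M_k mulmx1.
case: (L_cosets (x *m M)) => [LxM | LxMv]; first exact: sublattice_sub LxM (L_mulK _ LxM).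
case: (L_cosets x) => [Lx | Lxv]; first exact: sublattice_sub (L_mul _ Lx) Lx.
by have := sublattice_sub LxMv Lxv; rewrite opprB addrA subrK.
Qed.

Lemma sublattice_horner_sub p x : L (x *m horner_mx M p - p.[1] *: x).
Proof.
case: L_inv => L0 L_add _ L_mul; elim/poly_ind: p => [|p c IHp].
  by rewrite rmorph0 mulmx0 horner0 scale0r subrr.
have -> : x *m horner_mx M (p * 'X + c%:P) - (p * 'X + c%:P).[1] *: x =
    (x *m horner_mx M p - p.[1] *: x) *m M + p.[1] *: (x *m M - x).
  rewrite rmorphD rmorphM /= horner_mx_X horner_mx_C !hornerE.
  rewrite mulmxDr -mulmxE mulmxA mul_mx_scalar mulmxBl -scalemxAl scalerDl scalerBr.
  by rewrite opprD addrACA subrr addr0 addrA subrK.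
exact/L_add/sublattice_scale/sublattice_mulmx_sub/L_mul.
Qed.

Lemma sublattice_odd_scale c x : ~~ (2 %| c)%Z -> L (c *: x) -> L x.
Proof.
move=> /modz2_eq1 c_mod2 Lcx.
have L_cx_sub : L (c *: x - x).
  rewrite {1}(divz_eq c 2) c_mod2 scalerDl scale1r addrK -scalerA scaler_nat.
  exact/sublattice_scale/sublattice_double.
by have := sublattice_sub Lcx L_cx_sub; rewrite opprB addrC subrK.
Qed.

Lemma sublattice_horner_odd p x :
  ~~ (2 %| p.[1])%Z -> L (x *m horner_mx M p) -> L x.
Proof.
move=> p1_odd Lxp; apply: (sublattice_odd_scale p1_odd).
by have := sublattice_sub Lxp (sublattice_horner_sub p x); rewrite opprB addrC subrK.
Qed.

Lemma char_poly_at1_even : (2 %| (char_poly M).[1])%Z.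
Proof.
apply/negPn/negP => char1_odd; apply: v0_notin_L; apply: sublattice_horner_odd char1_odd _.
by rewrite Cayley_Hamilton mulmx0; case: L_inv.
Qed.

Lemma Bpart_sublattice_odd p x : ~~ (2 %| p.[1])%Z ->
  Bpart M (fun _ => True) p x <-> Bpart M L p x.
Proof.
move=> p1_odd; split=> [/(Bpart_horner k_gt0 M_k)[_ x_ker] | [_ x_eig]] //.
apply/(Bpart_horner k_gt0 M_k); split=> //; apply: sublattice_horner_odd p1_odd _.
by rewrite x_ker; case: L_inv.
Qed.

Lemma Bpart_index2 p q : char_poly M = q * p -> ~~ (2 %| q.[1])%Z ->
  index2 (Bpart M (fun _ => True) p) (Bpart M L p).
Proof.
move=> char_qp q1_odd; split=> [x [_ x_eig] // | ].
pose v := v0 *m horner_mx M q.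
have v_ker : v *m horner_mx M p = 0.
  by rewrite -mulmxA mulmxE -rmorphM /= -char_qp Cayley_Hamilton mulmx0.
have v_notin_L : ~ L v by move/(sublattice_horner_odd q1_odd).
have L_v_sub : L (v - v0) by case: (L_cosets v).
exists v; split=> [|[] // | x /(Bpart_horner k_gt0 M_k)[_ x_ker]].
  exact/(Bpart_horner k_gt0 M_k).
case: (L_cosets x) => [Lx | Lxv]; [left | right]; apply/(Bpart_horner k_gt0 M_k) => //.
split; last by rewrite mulmxBl x_ker v_ker subrr.
by have := sublattice_sub Lxv L_v_sub; rewrite opprB addrA subrK.
Qed.

End IndexTwoSublattice.

Theorem lemma2p12 :
  (forall s : seq nat, (forall m, m \in s -> (0 < m)%N) ->
     (((cycl_prod s).[1] %% 2)%Z = 1 <-> (forall m, m \in s -> ~ is_pow2 m)))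
  /\
  (forall (n : nat) (M : 'M[int]_n) (L1 : 'rV[int]_n -> Prop)
          (J1 J2 : seq nat),
     M \in unitmx ->
     (exists k : nat, (0 < k)%N /\ M ^+ k = 1) ->
     inv_sublattice M L1 ->
     index2 (fun _ => True) L1 ->
     (forall m, m \in J1 -> (0 < m)%N /\ ~ is_pow2 m) ->
     (forall m, m \in J2 -> is_pow2 m) ->
     char_poly M = cycl_prod J1 * cycl_prod J2 ->
     [/\ J2 != [::], cycl_prod J2 != 1 &
       forall t : seq nat, (forall m, m \in t -> (0 < m)%N) ->
         cycl_prod t %| char_poly M ->
         (cycl_prod t %| cycl_prod J1 ->
            forall x, Bpart M (fun _ => True) (cycl_prod t) x <-> Bpart M L1 (cycl_prod t) x)
         /\
         (cycl_prod J2 %| cycl_prod t ->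
            index2 (Bpart M (fun _ => True) (cycl_prod t)) (Bpart M L1 (cycl_prod t)))]).
Proof.
split; first exact: cycl_prod_at1_mod2.
move=> n M L1 J1 J2 _ [k [k_gt0 M_k]] L1_inv [_ [v0 [_ v0_notin_L1 L1_cosets]]].
move=> J1_npow2 _ char_J; have {}L1_cosets x := L1_cosets x I.
case: n => [|n'] in M L1 v0 M_k L1_inv v0_notin_L1 L1_cosets char_J *.
  by case: v0_notin_L1; rewrite (thinmx0 v0); case: L1_inv.
have p1_odd : ~~ (2 %| (cycl_prod J1).[1])%Z.
  by apply/(cycl_prod_at1_odd (fun m m_J1 => (J1_npow2 m m_J1).1)) => m /J1_npow2[].
have p2_neq1 : cycl_prod J2 != 1.
  apply: contraTneq (char_poly_at1_even L1_inv k_gt0 M_k v0_notin_L1 L1_cosets) => p2_eq1.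
  by rewrite char_J p2_eq1 mulr1.
split=> [|//|t _ t_char]; first by apply: contraNneq p2_neq1 => ->; rewrite /cycl_prod big_nil.
split=> [t_p1 x | p2_t].
  have t1_odd := dvdp_monic_at1_odd (cycl_prod_monic t) t_p1 p1_odd.
  exact: (Bpart_sublattice_odd L1_inv k_gt0 M_k v0_notin_L1 L1_cosets x t1_odd).
have [q char_qt] := Pdiv.IdomainMonic.dvdpP (cycl_prod_monic t) _ t_char.
have [s t_sp2] := Pdiv.IdomainMonic.dvdpP (cycl_prod_monic J2) _ p2_t.
apply: (Bpart_index2 L1_inv k_gt0 M_k v0_notin_L1 L1_cosets char_qt).
have p1_qs : cycl_prod J1 = q * s.
  by apply: (mulIf (monic_neq0 (cycl_prod_monic J2))); rewrite -char_J char_qt t_sp2 mulrA.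
by move: p1_odd; rewrite p1_qs hornerM Euclid_dvdzM // negb_or => /andP[].
Qed.
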